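(* In the MLR-DMPC setting described in the context, fix a CU $w$, a UAV $i\in\mathcal A$ and a round $k$. If, after the update procedure of round $k$, the information tracker $\mathcal D_{iw}(k)$ is not marked deprecated, then $\mathcal D_{iw}(k)$ contains the true reference trajectory $\hat p_i$ that UAV $i$ is following.
   Context: Setting (MLR-DMPC). There are $N$ UAVs indexed by $\mathcal A=\{1,\dots,N\}$ and $M$ compute units (CUs) indexed by $w\in\{1,\dots,M\}$, $1<M<N$. Time is divided into rounds $k=0,1,2,\dots$ of length $T>0$; each round consists of a computation phase followed by a communication phase in which every device broadcasts at most one message; any message may be lost at any receiver (arbitrary message loss). Nominal model: each UAV $i$ has a nominal system $\dot{\hat x}_i=\hat f_i(\hat x_i,\hat u_i)$, $\hat x_i\in\hat{\mathcal X}$, $\hat u_i\in\hat{\mathcal U}$, with nominal position $\hat p_i=\hat g_{p,i}(\hat x_i)\in\mathbb R^3$. Reference trajectories: in round $k$ UAV $i$ follows a reference $\hat x_i(\tau|k),\hat u_i(\tau|k)$, $\tau\ge 0$, applied at time $t=kT+\tau$. If in the communication phase of round $k$ UAV $i$ receives a trajectory $\hat u_{i,w}(\cdot|k)$ computed by CU $w$, then $\hat u_i(\tau|k+1)=\hat u_{i,w}(\tau+T|k)$; otherwise $\hat u_i(\tau|k+1)=\hat u_i(\tau+T|k)$. Each UAV broadcasts a message containing the metadata (computing CU and round) of the trajectory it currently follows. Information trackers: each CU $w$ keeps, for each UAV $i$, a set $\mathcal D_{iw}(k)$ of candidate trajectories (with metadata) together with a flag up-to-date/deprecated; elements are written $\tilde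 x_i(\cdot|k-1)$, $\tilde p_i(\cdot|k-1)$. Initially all trackers are empty and deprecated. At the start of round $k$, CU $w$ updates using the messages received in round $k-1$: (1) start from $\mathcal D_{iw}(k-1)$; for every UAV $i$ whose message was received, replace its tracker by the single stored trajectory whose metadata matches and mark that tracker up-to-date; (2) if some tracker then has more than one element, mark all trackers deprecated; (3) if fewer than $M$ CU messages were received, mark all trackers deprecated; (4) for every received CU message containing a newly computed trajectory for a UAV $i$, add it to $\mathcal D_{iw}(k)$. If all trackers are up-to-date, the CU runs a DMPC step: all such CUs compute the same set $\mathcal A_{ET}(k)$ of $M$ UAVs (highest priorities after max-consensus), CU $w$ selects the UAV at position $(k+w)\bmod M$ of $\mathcal A_{ET}(k)$ and, if that UAV's tracker has exactly one element, computes and broadcasts a new trajectory for it. Otherwise the CU is in message-loss-recovery mode: it computes no trajectory and instead (in alternate rounds) requests a UAV with a deprecated tracker to rebroadcast its current reference trajectory with metadata. *)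

From mathcomp Require Import all_boot.
Set Implicit Arguments. Unset Strict Implicit. Unset Printing Implicit Defensive.

Section MLRDMPC.

(* N UAVs ('I_N), M compute units ('I_M).  [Tr] is the (abstract) content of a
   reference trajectory (x-hat, u-hat, p-hat) expressed in ABSOLUTE time
   t = kT + tau, so that the time shift u(tau|k+1) = u(tau+T|k) is the identity
   on this representation. *)
Variables (N M : nat) (Tr : eqType).

(* Metadata: None = initial reference of the UAV, Some (w, k) = computed by CU w
   in round k. *)
Definition meta := option ('I_M * nat).
Definition plan := (meta * Tr)%type.

(* An execution: all the choices the environment / optimizers / channels make. *)
Record env := Env {
  init_traj : 'I_N -> Tr;
  rcvUC : nat -> 'I_N -> 'I_M -> bool;       (* rcvUC k i w : CU w receives UAV i's round-k message *)
  rcvCC : nat -> 'I_M -> 'I_M -> bool;       (* rcvCC k w' w : CU w receives CU w''s round-k message *)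
  rcvCU : nat -> 'I_M -> 'I_N -> bool;       (* rcvCU k w i : UAV i receives CU w's round-k message *)
  rebroadcast : nat -> 'I_N -> bool;
  target : nat -> 'I_M -> 'I_N;              (* UAV selected by CU w in round k (DMPC step) *)
  payload : nat -> 'I_M -> Tr                (* trajectory the optimizer of CU w returns in round k *)
}.

(* State at round k, after the tracker update at the start of round k. *)
Record state := State {
  trk : 'I_M -> 'I_N -> seq plan;            (* D_iw(k) : trk w i *)
  uptodate : 'I_M -> 'I_N -> bool;           (* flag: true = up-to-date, false = deprecated *)
  ref : 'I_N -> plan
}.

Variable e : env.

Definition ndist (s : seq plan) : nat := size (undup s).

Definition computes (s : state) (k : nat) (w : 'I_M) : bool :=
  [forall j, uptodate s w j] && (ndist (trk s w (target e k w)) == 1).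

Definition computed_plan (k : nat) (w : 'I_M) : plan := (Some (w, k), payload e k w).

(* UAV reference for round k+1. *)
Definition new_ref (s : state) (k : nat) (i : 'I_N) : plan :=
  match [pick w | [&& rcvCU e k w i, computes s k w & target e k w == i]] with
  | Some w => computed_plan k w
  | None => ref s i
  end.

Definition matches (s : state) (k : nat) (w : 'I_M) (i : 'I_N) : seq plan :=
  [seq p <- trk s w i ++ (if rebroadcast e k i then [:: ref s i] else [::])
     | p.1 == (ref s i).1].

Definition step1_trk (s : state) (k : nat) (w : 'I_M) (i : 'I_N) : seq plan :=
  if rcvUC e k i w && (matches s k w i != [::]) then matches s k w i else trk s w i.
Definition step1_flag (s : state) (k : nat) (w : 'I_M) (i : 'I_N) : bool :=
  if rcvUC e k i w && (matches s k w i != [::]) then true else uptodate s w i.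

Definition multi (s : state) (k : nat) (w : 'I_M) : bool :=
  [exists j, 1 < ndist (step1_trk s k w j)].
Definition few (s : state) (k : nat) (w : 'I_M) : bool :=
  #|[set w' | rcvCC e k w' w]| < M.

Definition new_trajs (s : state) (k : nat) (w : 'I_M) (i : 'I_N) : seq plan :=
  [seq computed_plan k w' | w' <- enum 'I_M
     & [&& rcvCC e k w' w, computes s k w' & target e k w' == i]].

Definition step (k : nat) (s : state) : state :=
  State (fun w i => step1_trk s k w i ++ new_trajs s k w i)
        (fun w i => [&& step1_flag s k w i, ~~ multi s k w & ~~ few s k w])
        (fun i => new_ref s k i).

Definition state0 : state :=
  State (fun _ _ => [::]) (fun _ _ => false) (fun i => (None, init_traj e i)).

Fixpoint run (k : nat) : state :=
  match k with 0 => state0 | k'.+1 => step k' (run k') end.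

End MLRDMPC.

(* A plan is determined by its metadata: the initial reference of a UAV is
   unique, and CU [w] produces at most one trajectory in round [k].  Every plan
   a UAV follows or a CU stores is genuine in this sense, so whenever a tracker
   is refreshed by a UAV message with matching metadata, the stored element is
   the UAV's reference itself.  If instead the UAV switches to a freshly
   computed trajectory, a tracker that stays up-to-date has heard all [M] CUs,
   in particular the one that computed it. *)
From mathcomp Require Import all_boot.

Set Implicit Arguments.
Unset Strict Implicit.
Unset Printing Implicit Defensive.

Section Trackers.

Variables (N M : nat) (Tr : eqType) (e : env N M Tr).

Definition plan_of_meta (i : 'I_N) (m : meta M) : plan M Tr :=
  if m is Some (w, k) then computed_plan e k w else (None, init_traj e i).

Definition genuine (i : 'I_N) (p : plan M Tr) : bool := p == plan_of_meta i p.1.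

Lemma genuine_meta_inj (i : 'I_N) (p q : plan M Tr) :
  genuine i p -> genuine i q -> p.1 = q.1 -> p = q.
Proof. by move=> /eqP gp /eqP gq pq; rewrite gp gq pq. Qed.

Lemma genuine_computed_plan (i : 'I_N) (k : nat) (w : 'I_M) :
  genuine i (computed_plan e k w).
Proof. exact: eqxx. Qed.

Lemma new_refP (s : state N M Tr) (k : nat) (i : 'I_N) :
  new_ref e s k i = ref s i \/
  exists2 w, computes e s k w && (target e k w == i)
           & new_ref e s k i = computed_plan e k w.
Proof.
rewrite /new_ref; case: pickP => [w /and3P [_ cw ti] | _]; last by left.
by right; exists w; rewrite ?cw.
Qed.

Lemma genuine_ref (k : nat) (i : 'I_N) : genuine i (ref (run e k) i).
Proof.
elim: k => [|k IHk] /=; first exact: eqxx.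
have [-> // | [w _ ->]] := new_refP (run e k) k i.
exact: genuine_computed_plan.
Qed.

Lemma mem_matches (s : state N M Tr) (k : nat) (w : 'I_M) (i : 'I_N)
    (p : plan M Tr) :
  p \in matches e s k w i ->
  p.1 = (ref s i).1 /\ ((p \in trk s w i) || (p == ref s i)).
Proof.
rewrite mem_filter mem_cat => /andP [/eqP p_meta p_in]; split=> //.
by case: (rebroadcast e k i) p_in; rewrite ?inE ?orbF // => ->.
Qed.

Lemma mem_new_trajs (s : state N M Tr) (k : nat) (w : 'I_M) (i : 'I_N)
    (p : plan M Tr) :
  p \in new_trajs e s k w i -> exists w', p = computed_plan e k w'.
Proof. by case/mapP=> w' _ ->; exists w'. Qed.

Lemma genuine_trk (k : nat) (w : 'I_M) (i : 'I_N) (p : plan M Tr) :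
  p \in trk (run e k) w i -> genuine i p.
Proof.
elim: k w i p => [//|k IHk] w i p /=; rewrite mem_cat => /orP [|].
  rewrite /step1_trk; case: ifP => _; last exact: IHk.
  case/mem_matches=> _ /orP [/IHk // | /eqP ->]; exact: genuine_ref.
by case/mem_new_trajs=> w' ->; exact: genuine_computed_plan.
Qed.

Lemma not_few_rcvCC (s : state N M Tr) (k : nat) (w w' : 'I_M) :
  ~~ few e s k w -> rcvCC e k w' w.
Proof.
rewrite /few -leqNgt => card_rcv.
suff all_rcv : [set w'' | rcvCC e k w'' w] = [set: 'I_M].
  by have := in_setT w'; rewrite -all_rcv inE.
by apply/eqP; rewrite eqEcard subsetT cardsT card_ord.
Qed.

Lemma computed_plan_in_new_trajs (s : state N M Tr) (k : nat) (w w' : 'I_M)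
    (i : 'I_N) :
  ~~ few e s k w -> computes e s k w' && (target e k w' == i) ->
  computed_plan e k w' \in new_trajs e s k w i.
Proof.
move=> not_few /andP [cw' ti]; apply: map_f.
by rewrite mem_filter mem_enum andbT (not_few_rcvCC w' not_few) cw'.
Qed.

Lemma ref_in_step1_trk (k : nat) (w : 'I_M) (i : 'I_N) :
  (uptodate (run e k) w i -> ref (run e k) i \in trk (run e k) w i) ->
  step1_flag e (run e k) k w i ->
  ref (run e k) i \in step1_trk e (run e k) k w i.
Proof.
rewrite /step1_flag /step1_trk; case: ifP => [/andP [_ has_match] _ _ | _ ref_in_trk /ref_in_trk //].
case Em: matches has_match => [//|q qs] _.
have /mem_matches [q_meta q_in] : q \in matches e (run e k) k w i.
  by rewrite Em mem_head.
suff -> : ref (run e k) i = q by exact: mem_head.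
apply: genuine_meta_inj (genuine_ref k i) _ (esym q_meta).
by case/orP: q_in => [/genuine_trk // | /eqP ->]; exact: genuine_ref.
Qed.

End Trackers.

Theorem lemma1 (N M : nat) (Tr : eqType) (e : env N M Tr) :
  1 < M < N ->
  forall (k : nat) (w : 'I_M) (i : 'I_N),
    uptodate (run e k) w i -> ref (run e k) i \in trk (run e k) w i.
Proof.
move=> _ k; elim: k => [//|k IHk] w i /= /and3P [flag _ not_few].
rewrite mem_cat; have [-> | [w' cw' ->]] := new_refP e (run e k) k i.
  by rewrite (ref_in_step1_trk (IHk w i) flag).
by rewrite computed_plan_in_new_trajs ?orbT.
Qed.
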